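(* Let $\mathcal{H}_O\simeq\mathbb{C}^{d_O}$ and $\mathcal{H}_R\simeq\mathbb{C}^{d_R}$. Let $H_R=\sum_{m=1}^{d_R}\lambda_m^{\uparrow}|\xi_m\rangle\langle\xi_m|$ with $\lambda_1^\uparrow\leqslant\dots\leqslant\lambda_{d_R}^\uparrow$ and $\{|\xi_m\rangle\}$ an orthonormal basis; let $\beta\in(0,\infty)$ and $\rho_R(\beta)=e^{-\beta H_R}/\mathrm{tr}[e^{-\beta H_R}]=\sum_m r_m^{\downarrow}|\xi_m\rangle\langle\xi_m|$. Let $\rho_O=\sum_{l=1}^{d_O}o_l^{\downarrow}|\varphi_l\rangle\langle\varphi_l|$ with $o_1^\downarrow\geqslant\dots\geqslant o_{d_O}^\downarrow$ and $\{|\varphi_l\rangle\}$ an orthonormal basis, and $\rho=\rho_O\otimes\rho_R(\beta)$. Let $p_{\varphi_1}^{\max}$ be the sum of the $d_R$ largest numbers among $\{o_l^\downarrow r_m^\downarrow\}_{l,m}$ (counted with multiplicity). Consider the following sequential swap algorithm, which applies a sequence of unitaries to $\rho$; throughout, the current state is diagonal in the basis $\{|\varphi_l\rangle\otimes|\xi_m\rangle\}$ and $p_{l,m}$ denotes its current diagonal entry at $|\varphi_l\rangle\otimes|\xi_m\rangle$ (initially $p_{l,m}=o_l^\downarrow r_m^\downarrow$). For $i=2,3,\dots,d_R$ (outer loop), for $m=d_R,d_R-1,\dots,1$ (middle loop), for $l=d_O,d_O-1,\dots,2$ (inner loop): if $p_{1,i}<p_{l,m}$, apply the unitary that swaps the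 basis vectors $|\varphi_1\rangle\otimes|\xi_i\rangle$ and $|\varphi_l\rangle\otimes|\xi_m\rangle$ and acts as the identity on all other basis vectors (this exchanges $p_{1,i}$ and $p_{l,m}$); otherwise do nothing. Let $\rho^{(j)}$ be the state after the $j$-th swap actually performed ($\rho^{(0)}=\rho$), $\rho_O^{(j)}=\mathrm{tr}_R[\rho^{(j)}]$, $\delta_j=p_{\varphi_1}^{\max}-\langle\varphi_1|\rho_O^{(j)}|\varphi_1\rangle$, and $\Delta Q_j=\mathrm{tr}[H_R(\mathrm{tr}_O[\rho^{(j)}]-\rho_R(\beta))]$. Then $(\delta_j)_j$ is non-increasing, $(\Delta Q_j)_j$ is non-decreasing, and for every $j$ the state $\rho_O^{(j)}$ is passive with respect to the ordered basis $(|\varphi_l\rangle)_l$, i.e. it is diagonal in this basis and $\langle\varphi_a|\rho_O^{(j)}|\varphi_a\rangle\geqslant\langle\varphi_b|\rho_O^{(j)}|\varphi_b\rangle$ whenever $a<b$.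
   Context: $\mathrm{tr}_O,\mathrm{tr}_R$ denote partial traces over $\mathcal{H}_O$ and $\mathcal{H}_R$. In the paper the basis $(|\varphi_l\rangle)_l$ is thought of as the eigenbasis of an object Hamiltonian in increasing order of energy, which is what makes this notion ''passive''. *)

From mathcomp Require Import all_boot all_order all_algebra.
From mathcomp Require Import reals sequences exp.
Set Implicit Arguments. Unset Strict Implicit. Unset Printing Implicit Defensive.
Import Order.TTheory GRing.Theory Num.Theory.
Local Open Scope ring_scope.

(* Conventions (0-based): the object basis (|phi_l>)_l is indexed by
   'I_dO.+1 (so phi_1 is index 0), the reservoir eigenbasis (|xi_m>)_m by
   'I_dR.+1.  Every state occurring in the algorithm is diagonal in the
   product basis |phi_l> (x) |xi_m>, and is represented by its diagonal
   p : 'I_dO.+1 -> 'I_dR.+1 -> R  (p l m = <phi_l xi_m| rho |phi_l xi_m>). *)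

Section Defs.
Variable R : realType.
Variables dO dR : nat.

Definition dstate := 'I_dO.+1 -> 'I_dR.+1 -> R.

Definition gibbs (beta : R) (lam : 'I_dR.+1 -> R) (m : 'I_dR.+1) : R :=
  expR (- beta * lam m) / \sum_(k < dR.+1) expR (- beta * lam k).

Definition prod_state (o : 'I_dO.+1 -> R) (r : 'I_dR.+1 -> R) : dstate :=
  fun l m => o l * r m.

Definition trR_diag (p : dstate) (l : 'I_dO.+1) : R := \sum_(m < dR.+1) p l m.
Definition trO_diag (p : dstate) (m : 'I_dR.+1) : R := \sum_(l < dO.+1) p l m.

Definition pmax (o : 'I_dO.+1 -> R) (r : 'I_dR.+1 -> R) : R :=
  \sum_(k < dR.+1)
     nth 0 (sort (fun x y : R => y <= x)
                 [seq o lm.1 * r lm.2 | lm : 'I_dO.+1 * 'I_dR.+1]) k.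

Definition swap_state (p : dstate) (i : 'I_dR.+1) (l : 'I_dO.+1) (m : 'I_dR.+1)
  : dstate :=
  fun a b =>
    if (a, b) == (l, m) then p ord0 i
    else if (a, b) == (ord0, i) then p l m
    else p a b.

(* loop indices (0-based): i = 1..dR, m = dR downto 0, l = dO downto 1 *)
Definition loop_indices : seq (nat * nat * nat) :=
  flatten [seq [seq (i, m, l) | m <- rev (iota 0 dR.+1),
                                 l <- rev (iota 1 dO)] | i <- iota 1 dR].

(* one step: accumulator = (current state, list of states after each
   performed swap, starting with rho^(0)) *)
Definition algo_step (acc : dstate * seq dstate) (t : nat * nat * nat)
  : dstate * seq dstate :=
  let: (p, hist) := acc in
  let: (i, m, l) := t in
  let i' : 'I_dR.+1 := inord i in
  let m' : 'I_dR.+1 := inord m in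
  let l' : 'I_dO.+1 := inord l in
  if p ord0 i' < p l' m' then
    let p' := swap_state p i' l' m' in (p', rcons hist p')
  else (p, hist).

Definition swap_history (p0 : dstate) : seq dstate :=
  (foldl algo_step (p0, [:: p0]) loop_indices).2.

Definition delta (o : 'I_dO.+1 -> R) (r : 'I_dR.+1 -> R) (p : dstate) : R :=
  pmax o r - trR_diag p ord0.

Definition heat (lam : 'I_dR.+1 -> R) (r : 'I_dR.+1 -> R) (p : dstate) : R :=
  \sum_(m < dR.+1) lam m * (trO_diag p m - r m).

(* passivity of tr_R[rho] w.r.t. the ordered basis (|phi_l>)_l:
   (diagonality is automatic in this diagonal representation) *)
Definition passive_diag (p : dstate) : Prop :=
  forall a b : 'I_dO.+1, (a < b)%N -> trR_diag p b <= trR_diag p a.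

End Defs.

(* Every swap performed moves a larger population into the row of |phi_1>,
   so the first row of the diagonal only grows and every other row only
   shrinks; in particular <phi_1| rho_O |phi_1> increases.  Each column
   stays non-increasing in l: the inner loop scans l downwards, so when
   (1,i) is exchanged with (l,m) all entries of column m below row l are
   already at most p_{1,i}.  Sorted columns give sorted row sums, i.e.
   passivity.  Finally a swap changes the heat by
   (lambda_i - lambda_m) (p_{l,m} - p_{1,i}), and it only happens for m <= i
   because entries of columns m > i never exceed the initial p_{1,i}. *)

From mathcomp Require Import all_boot all_order all_algebra.
From mathcomp Require Import reals sequences exp.
From mathcomp Require Import ring.
Import Order.TTheory GRing.Theory Num.Theory.
Local Open Scope ring_scope.
Set Implicit Arguments. Unset Strict Implicit.

Lemma foldl_flatten (A B : Type) (f : A -> B -> A) a ss :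
  foldl f a (flatten ss) = foldl (foldl f) a ss.
Proof. by elim: ss a => [|s ss IH] a //=; rewrite foldl_cat IH. Qed.

Lemma foldl_ind (A : Type) (B : eqType) (P : A -> Prop) (f : A -> B -> A) s a :
  P a -> (forall a x, x \in s -> P a -> P (f a x)) -> P (foldl f a s).
Proof.
elim: s a => [|x s IH] a //= Pa Pf.
apply: IH => [|b y ys]; first exact: Pf (mem_head _ _) Pa.
by apply: Pf; rewrite in_cons ys orbT.
Qed.

Lemma sum_delta (R : pzSemiRingType) (I : finType) (j : I) (F : I -> R) :
  \sum_(k : I) (k == j)%:R * F k = F j.
Proof.
rewrite (bigD1 j) //= eqxx mul1r big1 ?addr0 // => k /negbTE ->.
exact: mul0r.
Qed.

Section Swap.
Variables (R : realType) (dO dR : nat).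
Implicit Types (p : dstate R dO dR) (i k m : 'I_dR.+1) (a b l : 'I_dO.+1).

Definition col_sorted p : bool :=
  [forall k : 'I_dR.+1, forall a : 'I_dO.+1, forall b : 'I_dO.+1,
     (a <= b)%N ==> (p b k <= p a k)].

Lemma col_sortedP p :
  reflect (forall a b k, (a <= b)%N -> p b k <= p a k) (col_sorted p).
Proof.
apply: (iffP forallP) => [h a b k ab | h k].
  by move/forallP/(_ a)/forallP/(_ b)/implyP: (h k); apply.
by apply/forallP => a; apply/forallP => b; apply/implyP; apply: h.
Qed.

Lemma col_sorted_passive p : col_sorted p -> passive_diag p.
Proof.
by move/col_sortedP=> h a b ab; apply: ler_sum => k _; apply/h/ltnW.
Qed.

Section OneSwap.
Variables (p : dstate R dO dR) (i : 'I_dR.+1) (l : 'I_dO.+1) (m : 'I_dR.+1).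
Hypothesis l_neq0 : l != ord0.
Hypothesis swap_cond : p ord0 i < p l m.

Local Notation q := (swap_state p i l m).

Lemma swap_state_lm : q l m = p ord0 i.
Proof. by rewrite /swap_state eqxx. Qed.

Lemma swap_state_0i : q ord0 i = p l m.
Proof. by rewrite /swap_state xpair_eqE eq_sym (negbTE l_neq0) eqxx. Qed.

Lemma swap_state_other {a k} :
  (a, k) != (l, m) -> (a, k) != (ord0, i) -> q a k = p a k.
Proof. by rewrite /swap_state => /negbTE-> /negbTE->. Qed.

Lemma swap_state_row0 k : p ord0 k <= q ord0 k.
Proof.
have [->|ki] := eqVneq k i; first by rewrite swap_state_0i ltW.
by rewrite swap_state_other // xpair_eqE ?eqxx ?(negbTE ki) ?andbF //
  eq_sym (negbTE l_neq0).
Qed.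

Lemma swap_state_rowN {a k} : a != ord0 -> q a k <= p a k.
Proof.
move=> a0; have [[-> ->]|alm] := eqVneq (a, k) (l, m).
  by rewrite swap_state_lm ltW.
by rewrite swap_state_other // xpair_eqE (negbTE a0).
Qed.

Lemma swap_state_col_sorted :
  col_sorted p -> (forall b, (l < b)%N -> p b m <= p ord0 i) -> col_sorted q.
Proof.
move/col_sortedP=> sorted below; apply/col_sortedP => a b k ab.
have [->|a0] := eqVneq a ord0.
  have [->//|b0] := eqVneq b ord0.
  apply: le_trans (swap_state_rowN b0) _.
  exact: le_trans (sorted ord0 b k (leq0n b)) (swap_state_row0 k).
have b0 : b != ord0.
  apply: contraNneq a0 => b0; move: ab; rewrite b0 leqn0 => /eqP a_0.
  exact/eqP/val_inj.
have [[al km]|alm] := eqVneq (a, k) (l, m); last first.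
  rewrite (swap_state_other alm) ?xpair_eqE ?(negbTE a0) //.
  exact: le_trans (swap_state_rowN b0) (sorted _ _ _ ab).
subst a k; rewrite swap_state_lm.
have [->|bl] := eqVneq b l; first by rewrite swap_state_lm.
rewrite swap_state_other ?xpair_eqE ?(negbTE bl) ?(negbTE b0) //.
by apply: below; rewrite ltn_neqAle ab andbT eq_sym; exact: bl.
Qed.

Lemma swap_state_below :
  (forall b, (l < b)%N -> p b m <= p ord0 i) ->
  forall b, (l <= b)%N -> q b m <= q ord0 i.
Proof.
move=> below b; rewrite swap_state_0i leq_eqVlt => /predU1P[/val_inj <-|lb].
  by rewrite swap_state_lm ltW.
have b0 : b != ord0 by apply: contraTneq lb => ->.
apply: le_trans (swap_state_rowN (k:=m) b0) _.
exact: le_trans (below b lb) (ltW swap_cond).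
Qed.

Lemma swap_state_sub a k :
  q a k - p a k = (a == ord0)%:R * ((k == i)%:R * (p l m - p ord0 i))
                  - (a == l)%:R * ((k == m)%:R * (p l m - p ord0 i)).
Proof.
have [[-> ->]|alm] := eqVneq (a, k) (l, m).
  by rewrite swap_state_lm !eqxx (negbTE l_neq0) /=; ring.
have [[-> ->]|a0i] := eqVneq (a, k) (ord0, i).
  by rewrite swap_state_0i !eqxx eq_sym (negbTE l_neq0) /=; ring.
rewrite swap_state_other // subrr.
move: alm a0i; rewrite !xpair_eqE.
by case: (a == l); case: (a == ord0); case: (k == i); case: (k == m);
  rewrite //= ?mul0r ?mul1r ?subrr ?sub0r ?subr0 ?oppr0.
Qed.

Lemma trO_diag_swap k :
  trO_diag q k - trO_diag p k =
    ((k == i)%:R - (k == m)%:R) * (p l m - p ord0 i).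
Proof.
rewrite /trO_diag -sumrB (eq_bigr _ (fun a _ => swap_state_sub a k)).
by rewrite sumrB !sum_delta mulrBl.
Qed.

Lemma heat_swap (lam r : 'I_dR.+1 -> R) :
  heat lam r q - heat lam r p = (lam i - lam m) * (p l m - p ord0 i).
Proof.
set d := p l m - p ord0 i.
rewrite /heat -sumrB
  (eq_bigr (fun k => (k == i)%:R * (lam k * d) - (k == m)%:R * (lam k * d))).
  by rewrite sumrB !sum_delta mulrBl.
by move=> k _; rewrite -mulrBr opprB addrA subrK trO_diag_swap -/d; ring.
Qed.

End OneSwap.
End Swap.

Section History.
Variables (R : realType) (dO dR : nat) (lam r : 'I_dR.+1 -> R).
Variable p0 : dstate R dO dR.
Hypothesis lam_mono : {homo lam : a b / (a <= b)%N >-> a <= b}.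
Hypothesis p0_sorted : col_sorted p0.
Hypothesis p0_top :
  forall (l : 'I_dO.+1) (m i : 'I_dR.+1), (i <= m)%N -> p0 l m <= p0 ord0 i.

Definition improves (p q : dstate R dO dR) : bool :=
  (trR_diag p ord0 <= trR_diag q ord0) && (heat lam r p <= heat lam r q).

Definition dominated (p : dstate R dO dR) : Prop :=
  (forall k, p0 ord0 k <= p ord0 k) /\
  (forall a k, a != ord0 -> p a k <= p0 a k).

Definition history_inv (acc : dstate R dO dR * seq (dstate R dO dR)) : Prop :=
  dominated acc.1 /\
  exists s, [/\ acc.2 = p0 :: s, last p0 s = acc.1, path improves p0 s
              & all (@col_sorted R dO dR) acc.2].

Lemma history_inv_sorted acc : history_inv acc -> col_sorted acc.1.
Proof.
case=> _ [s [-> <- _ /(all_nthP p0) sorted_s]].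
by rewrite (last_nth p0); apply: sorted_s.
Qed.

Section OneStep.
Variables (p : dstate R dO dR) (i : 'I_dR.+1) (l : 'I_dO.+1) (m : 'I_dR.+1).
Hypothesis p_dom : dominated p.
Hypothesis l_neq0 : l != ord0.
Hypothesis swap_cond : p ord0 i < p l m.

Lemma swap_dominated : dominated (swap_state p i l m).
Proof.
case: p_dom => row0 rowN; split=> [k | a k a0].
  exact: le_trans (row0 k) (swap_state_row0 l_neq0 swap_cond k).
exact: le_trans (swap_state_rowN swap_cond a0) (rowN a k a0).
Qed.

(* If i < m then p l m <= p0 l m <= p0 ord0 i <= p ord0 i. *)
Lemma swap_level_le : (m <= i)%N.
Proof.
case: p_dom => row0 rowN; rewrite leqNgt; apply/negP => /ltnW im.
have := le_trans (rowN l m l_neq0) (le_trans (p0_top l im) (row0 i)).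
by rewrite leNgt swap_cond.
Qed.

Lemma swap_improves : improves p (swap_state p i l m).
Proof.
apply/andP; split.
  by apply: ler_sum => k _; apply: swap_state_row0.
rewrite -subr_ge0 heat_swap // mulr_ge0 // subr_ge0 ?lam_mono ?swap_level_le //.
exact: ltW.
Qed.

End OneStep.

Definition col_tail_le (p : dstate R dO dR) (i m : 'I_dR.+1) (l : nat) : Prop :=
  forall b : 'I_dO.+1, (l <= b)%N -> p b m <= p ord0 i.

Lemma algo_step_inv acc (i m l : nat) :
  (0 < l)%N -> (l <= dO)%N -> history_inv acc ->
  col_tail_le acc.1 (inord i) (inord m) l.+1 ->
  history_inv (algo_step acc (i, m, l)) /\
  col_tail_le (algo_step acc (i, m, l)).1 (inord i) (inord m) l.
Proof.
case: acc => p hist l_gt0 l_le inv /=.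
have p_sorted := history_inv_sorted inv.
case: inv => dom [s [/= hist_eq last_eq path_s sorted_hist]] tail.
rewrite /algo_step; set i' : 'I_dR.+1 := inord i; set m' : 'I_dR.+1 := inord m.
set l' : 'I_dO.+1 := inord l.
have vl : nat_of_ord l' = l by rewrite inordK.
have l'0 : l' != ord0 by rewrite -val_eqE /= vl -lt0n.
case: ifP => [swap_cond | /negbT no_swap] /=; last first.
  split; first by split=> //; exists s.
  move=> b; rewrite leq_eqVlt => /predU1P[lb|]; last exact: tail.
  have -> : b = l' by apply/val_inj; rewrite /= vl.
  by rewrite leNgt.
rewrite -vl in tail *; split; last exact: swap_state_below.
split; first exact: swap_dominated.
exists (rcons s (swap_state p i' l' m')); split.
- by rewrite hist_eq.
- exact: last_rcons.
- by rewrite rcons_path path_s last_eq swap_improves.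
- by rewrite all_rcons sorted_hist swap_state_col_sorted.
Qed.

Lemma inner_loop_inv (i m k : nat) acc : (k <= dO)%N -> history_inv acc ->
  col_tail_le acc.1 (inord i) (inord m) k.+1 ->
  history_inv (foldl (@algo_step R dO dR) acc
                     [seq (i, m, l) | l <- rev (iota 1 k)]).
Proof.
elim: k acc => [//|k IH] acc k_le inv tail.
have -> : iota 1 k.+1 = rcons (iota 1 k) k.+1.
  by rewrite -cats1 -{1}[k.+1]addn1 iotaD add1n.
rewrite rev_rcons /=.
have [inv' tail'] := algo_step_inv (ltn0Sn k) k_le inv tail.
exact: IH (ltnW k_le) inv' tail'.
Qed.

Lemma swap_history_inv :
  history_inv (foldl (@algo_step R dO dR) (p0, [:: p0]) (loop_indices dO dR)).
Proof.
have inv0 : history_inv (p0, [:: p0]).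
  by split=> //; exists [::]; rewrite /= p0_sorted.
rewrite /loop_indices foldl_flatten.
apply: foldl_ind inv0 _ => acc _ /mapP[i _ ->] inv; rewrite foldl_flatten.
apply: foldl_ind inv _ => acc' _ /mapP[m _ ->] inv'.
apply: inner_loop_inv (leqnn dO) inv' _ => b.
by rewrite leqNgt ltn_ord.
Qed.

End History.

Section InitialState.
Variables (R : realType) (dO dR : nat).

Lemma gibbs_ge0 beta (lam : 'I_dR.+1 -> R) m : 0 <= gibbs beta lam m.
Proof. by rewrite divr_ge0 ?expR_ge0 ?sumr_ge0 // => k _; apply: expR_ge0. Qed.

Lemma gibbs_antimono beta (lam : 'I_dR.+1 -> R) :
  0 <= beta -> {homo lam : a b / (a <= b)%N >-> a <= b} ->
  {homo gibbs beta lam : a b / (a <= b)%N >-> b <= a}.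
Proof.
move=> beta_ge0 lam_mono a b ab.
have Z_ge0 : 0 <= \sum_(k < dR.+1) expR (- beta * lam k).
  by apply: sumr_ge0 => k _; apply: expR_ge0.
by rewrite ler_wpM2r ?invr_ge0 // ler_expR !mulNr lerN2 ler_wpM2l // lam_mono.
Qed.

Variables (o : 'I_dO.+1 -> R) (r : 'I_dR.+1 -> R).
Hypothesis o_anti : {homo o : a b / (a <= b)%N >-> b <= a}.
Hypothesis r_ge0 : forall m, 0 <= r m.

Lemma prod_state_col_sorted : col_sorted (prod_state o r).
Proof. by apply/col_sortedP => a b k ab; rewrite ler_wpM2r // o_anti. Qed.

Lemma prod_state_top (o_ge0 : forall l, 0 <= o l)
    (r_anti : {homo r : a b / (a <= b)%N >-> b <= a}) l (m i : 'I_dR.+1) :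
  (i <= m)%N -> prod_state o r l m <= prod_state o r ord0 i.
Proof.
move=> im; apply: (@le_trans _ _ (o ord0 * r m)).
  by rewrite ler_wpM2r // o_anti.
by rewrite ler_wpM2l // r_anti.
Qed.

End InitialState.

Theorem lemma4 (R : realType) (dO dR : nat)
  (lam : 'I_dR.+1 -> R) (beta : R) (o : 'I_dO.+1 -> R)
  (hlam : forall a b : 'I_dR.+1, (a <= b)%N -> lam a <= lam b)
  (hbeta : 0 < beta)
  (ho_nonneg : forall l, 0 <= o l)
  (ho_sum : \sum_(l < dO.+1) o l = 1)
  (ho_dec : forall a b : 'I_dO.+1, (a <= b)%N -> o b <= o a) :
  let r := gibbs beta lam in
  let hist := swap_history (prod_state o r) in
  (forall j : nat, (j.+1 < size hist)%N ->
     delta o r (nth (prod_state o r) hist j.+1)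
       <= delta o r (nth (prod_state o r) hist j)) /\
  (forall j : nat, (j.+1 < size hist)%N ->
     heat lam r (nth (prod_state o r) hist j)
       <= heat lam r (nth (prod_state o r) hist j.+1)) /\
  (forall j : nat, (j < size hist)%N ->
     passive_diag (nth (prod_state o r) hist j)).
Proof.
move=> r hist.
have r_ge0 := gibbs_ge0 beta lam.
have r_anti := gibbs_antimono (ltW hbeta) hlam.
have [_ [s [hist_eq _ /(pathP (prod_state o r)) improving sorted_hist]]] :=
  swap_history_inv r hlam (prod_state_col_sorted ho_dec r_ge0)
    (prod_state_top ho_dec r_ge0 ho_nonneg r_anti).
rewrite -/(swap_history _) -/hist in hist_eq sorted_hist.
rewrite hist_eq in sorted_hist *; split; [|split] => j j_lt.
- by have /andP[+ _] := improving j j_lt; rewrite /delta lerD2l lerN2.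
- by have /andP[_ +] := improving j j_lt.
- exact/col_sorted_passive/(all_nthP _ sorted_hist).
Qed.
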